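(* Let $(L,\cap,\uplus)$ be a finite lattice with a semi-graphoid relation $(\cdot\bot\cdot\mid\cdot)$. Define $A\supseteq_{\bot}B$ to mean $(B\bot B\mid A)$. Then: (i) the relation $\supseteq_\bot$ satisfies Armstrong's axioms; (ii) the relation $(\cdot\bot\cdot\mid\cdot)$ restricted to the lattice $L_c$ of elements closed under $\supseteq_\bot$ (with meet $\cap$ and join $X\uplus_c Y=cl(X\uplus Y)$, where $cl(X)$ is the largest element $Y$ with $X\supseteq_\bot Y$) is a semi-graphoid relation on $L_c$; (iii) if the semi-graphoid relation is given by a polymatroid function $h$ on $L$, then the restriction of $h$ to $L_c$ is a polymatroid function on $L_c$.
   Context: A relation $(\cdot\bot\cdot\mid\cdot)$ on a lattice with meet $\cap$ and join $\uplus$ is semi-graphoid if for all elements $X,Y,Z,W$: (Existence) $(X\bot Y\mid X)$; (Symmetry) $(X\bot Y\mid W)$ iff $(Y\bot X\mid W)$; (Decomposition) $(X\bot Y\uplus Z\mid W)$ implies $(X\bot Z\mid W)$; (Contraction) $(X\bot Z\mid W)$ and $(X\bot Y\mid Z\uplus W)$ imply $(X\bot Y\uplus Z\mid W)$; (Weak union) $(X\bot Y\uplus Z\mid W)$ implies $(X\bot Y\mid Z\uplus W)$. A relation $\to$ satisfies Armstrong's axioms if: $X\to Y$ and $Y\to Z$ imply $X\to Z$; $X\supseteq Y$ implies $X\to Y$; $X\to Y$ implies $X\uplus Z\to Y\uplus Z$. An element $X$ is closed under $\supseteq_\bot$ if $X\supseteq_\bot Y$ implies $X\supseteq Y$. A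 polymatroid function on a lattice is a function $h:L\to\mathbb{R}$ that is non-negative, increasing ($X\supseteq Y\Rightarrow h(X)\ge h(Y)$) and submodular ($h(X)+h(Y)\ge h(X\uplus Y)+h(X\cap Y)$). The semi-graphoid relation given by $h$ is: $(X\bot Y\mid Z)$ iff $h(X\uplus Z)+h(Y\uplus Z)=h(X\uplus Y\uplus Z)+h(Z)$. *)

From HB Require Import structures.
From mathcomp Require Import all_boot all_order all_algebra.
Set Implicit Arguments. Unset Strict Implicit. Unset Printing Implicit Defensive.
Import Order.TTheory GRing.Theory Num.Theory.

(* Lattice conventions: meet "cap" = Order.meet, join "uplus" = Order.join,
   and "X \supseteq Y" is the lattice order  Y <= X. *)

Definition semigraphoid (T : Type) (P : T -> Prop) (jn : T -> T -> T)
  (ci : T -> T -> T -> Prop) : Prop :=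
  (forall X Y, P X -> P Y -> ci X Y X) /\
  (forall X Y W, P X -> P Y -> P W -> (ci X Y W <-> ci Y X W)) /\
  (forall X Y Z W, P X -> P Y -> P Z -> P W ->
     ci X (jn Y Z) W -> ci X Z W) /\
  (forall X Y Z W, P X -> P Y -> P Z -> P W ->
     ci X Z W -> ci X Y (jn Z W) -> ci X (jn Y Z) W) /\
  (forall X Y Z W, P X -> P Y -> P Z -> P W ->
     ci X (jn Y Z) W -> ci X Y (jn Z W)).

Definition armstrong (T : Type) (sup : T -> T -> Prop) (jn : T -> T -> T)
  (dep : T -> T -> Prop) : Prop :=
  (forall X Y Z, dep X Y -> dep Y Z -> dep X Z) /\
  (forall X Y, sup X Y -> dep X Y) /\
  (forall X Y Z, dep X Y -> dep (jn X Z) (jn Y Z)).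

Local Open Scope ring_scope.
Definition polymatroid (R : numDomainType) (T : Type) (P : T -> Prop)
  (sup : T -> T -> Prop) (mt jn : T -> T -> T) (h : T -> R) : Prop :=
  (forall X, P X -> 0 <= h X) /\
  (forall X Y, P X -> P Y -> sup X Y -> h Y <= h X) /\
  (forall X Y, P X -> P Y -> h (jn X Y) + h (mt X Y) <= h X + h Y).

Local Close Scope ring_scope.
Section Closure.
Variables (d : Order.disp_t) (L : finTBLatticeType d) (ci : L -> L -> L -> bool).

Definition supb (A B : L) : bool := ci B B A.

Definition closedb (X : L) : Prop := forall Y, supb X Y -> (Y <= X)%O.

Definition cl (X : L) : L := (\join_(Y : L | supb X Y) Y)%O.

Definition joinc (X Y : L) : L := cl (X `|` Y)%O.
End Closure.

From HB Require Import structures.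
From mathcomp Require Import all_boot all_order all_algebra.
Import Order.TTheory GRing.Theory Num.Theory.

(* Write [X -> Y] for [(Y bot Y | X)].  Contraction and decomposition let a
   statement [(A bot B | W)] be strengthened along such dependencies: [B] may
   be replaced by anything it determines, and [W] by anything it determines.
   This gives Armstrong's axioms and the equivalence of [(A bot B | W)] with
   [(A bot B | cl W)], which transports the semi-graphoid axioms to [L_c] with
   join [cl (X `|` Y)].  For a polymatroid, [(cl W bot cl W | W)] reads
   [h (cl W) = h W], so submodularity on [L] gives submodularity on [L_c]. *)

Set Implicit Arguments.
Unset Strict Implicit.

Local Open Scope order_scope.

Section SemiGraphoidClosure.

Variables (d : Order.disp_t) (L : finTBLatticeType d) (ci : L -> L -> L -> bool).

Hypothesis ci_sg :
  semigraphoid (fun _ => True) (fun X Y => X `|` Y) (fun X Y Z => ci X Y Z).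

Lemma ci_existence X Y : ci X Y X.
Proof. by case: ci_sg => + _; apply. Qed.

Lemma ciC X Y W : ci X Y W -> ci Y X W.
Proof. by case: ci_sg => _ [sym _] /(sym X Y W I I I).1. Qed.

Lemma ci_decomposition X Y Z W : ci X (Y `|` Z) W -> ci X Z W.
Proof. by case: ci_sg => _ [_ [+ _]]; apply. Qed.

Lemma ci_contraction X Y Z W : ci X Z W -> ci X Y (Z `|` W) -> ci X (Y `|` Z) W.
Proof. by case: ci_sg => _ [_ [_ [+ _]]]; apply. Qed.

Lemma ci_weak_union X Y Z W : ci X (Y `|` Z) W -> ci X Y (Z `|` W).
Proof. by case: ci_sg => _ [_ [_ [_]]]; apply. Qed.

Lemma ci_le_cond A B W : B <= W -> ci A B W.
Proof.
move=> leBW; apply: (@ci_decomposition _ W).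
by rewrite (join_idPl leBW); apply/ciC/ci_existence.
Qed.

Lemma ci_join_cond A B W : ci A B W -> ci A (B `|` W) W.
Proof. by move=> ciABW; apply: ci_contraction; [apply: ci_le_cond | rewrite joinxx]. Qed.

Lemma supbW X Y : Y <= X -> supb ci X Y.
Proof. exact: ci_le_cond. Qed.

Lemma supb_ci X Y V : supb ci X Y -> ci Y V X.
Proof.
move=> supXY; apply: (@ci_decomposition _ Y); rewrite joinC.
by apply: ci_contraction => //; apply/ciC/ci_le_cond/leUl.
Qed.

Lemma supb_ci_cond X Y V W : supb ci X Y -> ci Y V (W `|` X).
Proof. by move/supb_ci/ci_weak_union. Qed.

Lemma supb_trans X Y Z : supb ci X Y -> supb ci Y Z -> supb ci X Z.
Proof.
move=> supXY supYZ; apply: (@ci_decomposition _ Y); rewrite joinC.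
by apply: ci_contraction; [apply/ciC/supb_ci | rewrite joinC supb_ci_cond].
Qed.

Lemma ci_supb A B B' W : ci A B W -> supb ci B B' -> ci A B' W.
Proof.
move=> ciABW supBB'; apply: (@ci_decomposition _ B); rewrite joinC.
apply: ci_contraction => //; apply/ciC/supb_ci.
by rewrite /supb joinC; apply: supb_ci_cond.
Qed.

Lemma supb_join2r X Y Z : supb ci X Y -> supb ci (X `|` Z) (Y `|` Z).
Proof.
move=> supXY; apply: (@ci_decomposition _ (X `|` Z)).
have -> : (X `|` Z) `|` (Y `|` Z) = Y `|` (X `|` Z).
  by rewrite joinC -joinA (join_idPr (leUr _ _)).
by apply/ci_join_cond/ciC; rewrite [X `|` Z]joinC; apply: supb_ci_cond.
Qed.

Lemma supb_join X A B : supb ci X A -> supb ci X B -> supb ci X (A `|` B).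
Proof.
move=> supXA supXB; apply: (supb_trans (Y := X `|` A)).
  by have := supb_join2r X supXA; rewrite joinxx joinC.
by rewrite [A `|` B]joinC; apply: supb_join2r.
Qed.

Lemma armstrong_supb :
  armstrong (fun X Y => Y <= X) (fun X Y => X `|` Y) (fun X Y => supb ci X Y).
Proof. by split; [apply: supb_trans | split; [apply: supbW | apply: supb_join2r]]. Qed.

Lemma supb_cl X : supb ci X (cl ci X).
Proof.
apply: (big_ind (supb ci X)) => //; last exact: supb_join.
exact/supbW/le0x.
Qed.

Lemma supb_le_cl X Y : supb ci X Y -> Y <= cl ci X.
Proof. exact: (joins_sup (fun Y : L => Y)). Qed.

Lemma le_cl X : X <= cl ci X.
Proof. exact/supb_le_cl/supbW. Qed.

Lemma cl_closed X : closedb ci (cl ci X).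
Proof. by move=> Y /(supb_trans (supb_cl X)); apply: supb_le_cl. Qed.

Lemma ci_cl_cond A B W : ci A B (cl ci W) = ci A B W.
Proof.
apply/idP/idP => ciAB.
  apply: (@ci_decomposition _ (cl ci W)); rewrite joinC.
  apply: ci_contraction; first exact/ciC/supb_ci/supb_cl.
  by rewrite (join_idPl (le_cl W)).
have ciAWB : ci A (B `|` cl ci W) W.
  apply: (ci_supb (ci_join_cond ciAB)).
  by rewrite [B `|` W]joinC [B `|` _]joinC supb_join2r ?supb_cl.
by have := ci_weak_union ciAWB; rewrite (join_idPl (le_cl W)).
Qed.

Lemma closed_meet X Y :
  closedb ci X -> closedb ci Y -> closedb ci (X `&` Y).
Proof.
move=> clX clY V supXYV; rewrite lexI.
by rewrite clX ?clY //; apply: supb_trans supXYV; apply: supbW; rewrite ?leIl ?leIr.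
Qed.

Lemma joincP X Y :
  [/\ closedb ci (joinc ci X Y), X <= joinc ci X Y, Y <= joinc ci X Y &
      forall Z, closedb ci Z -> X <= Z -> Y <= Z -> joinc ci X Y <= Z].
Proof.
split.
- exact: cl_closed.
- exact: le_trans (leUl X Y) (le_cl _).
- exact: le_trans (leUr Y X) (le_cl _).
- move=> Z clZ leXZ leYZ; apply/clZ/(supb_trans _ (supb_cl _)).
  by apply: supbW; rewrite leUx leXZ.
Qed.

Lemma semigraphoid_closed :
  semigraphoid (closedb ci) (joinc ci) (fun X Y Z => ci X Y Z).
Proof.
have ci_joinc A B C W : ci A (joinc ci B C) W -> ci A (B `|` C) W.
  by move/ci_supb; apply; apply/supbW/le_cl.
split; first by move=> X Y _ _; apply: ci_existence.
split; first by move=> X Y W _ _ _; split; apply: ciC.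
split; first by move=> X Y Z W _ _ _ _ /ci_joinc /ci_decomposition.
split.
  move=> X Y Z W _ _ _ _ ciXZW; rewrite /joinc ci_cl_cond => ciXYZW.
  exact: ci_supb (ci_contraction ciXZW ciXYZW) (supb_cl _).
move=> X Y Z W _ _ _ _ /ci_joinc ciXYZW.
by rewrite /joinc ci_cl_cond; apply: ci_weak_union.
Qed.

Section Polymatroid.

Local Open Scope ring_scope.

Variables (R : realFieldType) (h : L -> R).

Hypothesis ciE :
  forall X Y Z, ci X Y Z <-> h (X `|` Z) + h (Y `|` Z) = h (X `|` Y `|` Z) + h Z.

Lemma h_cl X : h (cl ci X) = h X.
Proof.
have := (ciE (cl ci X) (cl ci X) X).1 (supb_cl X).
by rewrite joinxx (join_idPl (le_cl X)) => /addrI.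
Qed.

Lemma polymatroid_closed :
  polymatroid (fun _ => True) (fun X Y => (Y <= X)%O) (fun X Y => (X `&` Y)%O)
    (fun X Y => (X `|` Y)%O) h ->
  polymatroid (closedb ci) (fun X Y => (Y <= X)%O) (fun X Y => (X `&` Y)%O)
    (joinc ci) h.
Proof.
move=> [h_ge0 [h_mono h_submod]].
split; first by move=> X _; apply: h_ge0.
split; first by move=> X Y _ _; apply: h_mono.
by move=> X Y _ _; rewrite /joinc h_cl; apply: h_submod.
Qed.

End Polymatroid.

End SemiGraphoidClosure.

Local Close Scope order_scope.
Local Open Scope ring_scope.

Theorem theorem2 (d : Order.disp_t) (L : finTBLatticeType d)
  (ci : L -> L -> L -> bool) :
  semigraphoid (fun _ => True) (fun X Y => (X `|` Y)%O) (fun X Y Z => ci X Y Z) ->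
  (* (i) Armstrong's axioms for \supseteq_bot *)
  armstrong (fun X Y => (Y <= X)%O) (fun X Y => (X `|` Y)%O)
            (fun X Y => supb ci X Y) /\
  (* (ii) L_c is a lattice (closed under meet; joinc is its join), and the
     restriction of ci to L_c is a semi-graphoid w.r.t. joinc *)
  ((forall X Y, closedb ci X -> closedb ci Y -> closedb ci (X `&` Y)%O) /\
   (forall X Y, closedb ci X -> closedb ci Y ->
      [/\ closedb ci (joinc ci X Y), (X <= joinc ci X Y)%O,
          (Y <= joinc ci X Y)%O &
          forall Z, closedb ci Z -> (X <= Z)%O -> (Y <= Z)%O ->
                    (joinc ci X Y <= Z)%O]) /\
   semigraphoid (closedb ci) (joinc ci) (fun X Y Z => ci X Y Z)) /\
  (* (iii) polymatroid case *)
  (forall (R : realFieldType) (h : L -> R),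
     polymatroid (fun _ => True) (fun X Y => (Y <= X)%O)
                 (fun X Y => (X `&` Y)%O) (fun X Y => (X `|` Y)%O) h ->
     (forall X Y Z, ci X Y Z <->
        h (X `|` Z)%O + h (Y `|` Z)%O = h (X `|` Y `|` Z)%O + h Z) ->
     polymatroid (closedb ci) (fun X Y => (Y <= X)%O)
                 (fun X Y => (X `&` Y)%O) (joinc ci) h).
Proof.
move=> ci_sg; split; first exact: armstrong_supb.
split; last by move=> R h hpoly ciE; apply: polymatroid_closed.
split; first exact: closed_meet.
split; last exact: semigraphoid_closed.
by move=> X Y _ _; apply: joincP.
Qed.
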